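(* Let $\mathcal{S}$ be the STAIR code with inside global parity symbols as defined in the context, so that every parity entry $X_{i_0,j_0}$ (with $(i_0,j_0)\in T$ or $j_0\ge n-m$) is a linear function $X_{i_0,j_0}=\sum c_{i,j}\,X_{i,j}$ of the entries at data positions $(i,j)$. Then $c_{i,j}\neq 0$ only if $i\le i_0$ and $j\le j_0$. Moreover, $c_{i,j}=0$ whenever $j\ne j_0$ and $h(j)=h(j_0)$ (columns spanned by the same tread), and $c_{i,j}=0$ whenever $i\ne i_0$ and $v(i)=v(i_0)$ (rows spanned by the same riser).
   Context: Parameters: integers $n,r,m,m'$ with $1\le m<n$, $1\le m'\le n-m$, and $\mathbf{e}=(e_0,\dots,e_{m'-1})$ with $0<e_0\le\cdots\le e_{m'-1}\le r$; $s=\sum_l e_l$. Field $\mathbb{F}=GF(2^w)$ with $n+m'\le 2^w$, $r+e_{m'-1}\le 2^w$. $\mathcal{C}_{row}$ is a systematic linear MDS $(n+m',n-m)$-code and $\mathcal{C}_{col}$ a systematic linear MDS $(r+e_{m'-1},r)$-code over $\mathbb{F}$ (length, dimension; systematic = codeword is the input symbols followed by parity symbols). Stair positions: $T=\{(i,\,n-m-m'+l): 0\le l\le m'-1,\ r-e_l\le i\le r-1\}$. Data positions: all $(i,j)$ with $j\le n-m-1$ and $(i,j)\notin T$. $\mathcal{S}$ is the set of $r\times n$ arrays $X$ over $\mathbb{F}$ for which there is an $r\times m'$ array $P'$ such that each row $(X_{i,0},\dots,X_{i,n-1},P'_{i,0},\dots,P'_{i,m'-1})$ is a codeword of $\mathcal{C}_{row}$,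 and for each $l$ the first $e_l$ of the $e_{m'-1}$ parity symbols of the $\mathcal{C}_{col}$-encoding of column $(P'_{0,l},\dots,P'_{r-1,l})$ are zero. The data entries determine $X\in\mathcal{S}$ uniquely and linearly. Define the parity height of column $j$: $h(j)=0$ for $j<n-m-m'$, $h(n-m-m'+l)=e_l$ for $0\le l\le m'-1$, and $h(j)=r$ for $j\ge n-m$. Define for row $i$: $v(i)=\#\{j: h(j)\ge r-i\}$, the number of parity positions in row $i$. *)

From HB Require Import structures.
From mathcomp Require Import all_boot all_order all_algebra all_field.
Set Implicit Arguments. Unset Strict Implicit. Unset Printing Implicit Defensive.
Import GRing.Theory.
Local Open Scope ring_scope.

(* A systematic linear (K+R, K)-code over F is given by the parity part A of its
   systematic generator matrix [I_K | A]: the input u is encoded as the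
   codeword (u, u A) of length K+R. *)
Definition sys_enc (F : fieldType) (K R : nat) (A : 'M[F]_(K, R))
  (u : 'rV[F]_K) : 'rV[F]_(K + R) := row_mx u (u *m A).

Definition wt (F : fieldType) (N : nat) (c : 'rV[F]_N) : nat :=
  #|[set j : 'I_N | c 0%R j != 0%R]|.

(* MDS: minimum distance = length - dimension + 1 = R + 1, i.e. every nonzero
   codeword (linear code) has weight at least R + 1. *)
Definition is_sys_MDS (F : fieldType) (K R : nat) (A : 'M[F]_(K, R)) : Prop :=
  forall u : 'rV[F]_K, u != 0%R -> (R < wt (sys_enc A u))%N.

Definition in_T (n r m m' : nat) (e : nat -> nat) (i j : nat) : bool :=
  [&& (n - m - m' <= j)%N, (j < n - m)%N,
      (r - e (j - (n - m - m')) <= i)%N & (i < r)%N].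

Definition data_pos (n r m m' : nat) (e : nat -> nat) (i j : nat) : bool :=
  [&& (i < r)%N, (j < n - m)%N & ~~ in_T n r m m' e i j].

Definition parity_pos (n r m m' : nat) (e : nat -> nat) (i j : nat) : bool :=
  [&& (i < r)%N, (j < n)%N & in_T n r m m' e i j || (n - m <= j)%N].

Definition hgt (n r m m' : nat) (e : nat -> nat) (j : nat) : nat :=
  if (j < n - m - m')%N then 0%N
  else if (j < n - m)%N then e (j - (n - m - m'))%N else r.

(* number of parity positions in row i *)
Definition vcnt (n r m m' : nat) (e : nat -> nat) (i : nat) : nat :=
  #|[set j : 'I_n | (r - i <= hgt n r m m' e j)%N]|.

(* The code S: X (an r x n array) is in S iff there is an r x m' array P' with
   every row (X_i, P'_i) a codeword of C_row (length n+m' = (n-m)+(m+m')), and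
   for each l < m', the first e_l of the e_{m'-1} parity symbols of the C_col
   encoding of column l of P' vanish. *)
Definition in_S (F : fieldType) (n r m m' : nat) (e : nat -> nat)
  (Arow : 'M[F]_(n - m, m + m')) (Acol : 'M[F]_(r, e m'.-1))
  (X : nat -> nat -> F) : Prop :=
  exists P' : nat -> nat -> F,
    (forall i, (i < r)%N -> exists u : 'rV[F]_(n - m),
        \row_(k < (n - m) + (m + m'))
            (if (k < n)%N then X i k else P' i (k - n)%N) = sys_enc Arow u)
    /\ (forall l, (l < m')%N -> forall t : 'I_(e m'.-1), (t < e l)%N ->
          ((\row_(k < r) P' k l) *m Acol) 0%R t = 0%R).
Arguments in_S {F} n r m m' e Arow Acol X.

From HB Require Import structures.
From mathcomp Require Import all_boot all_order all_algebra all_field.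
From mathcomp Require Import zify.
Import GRing.Theory.
Set Implicit Arguments. Unset Strict Implicit. Unset Printing Implicit Defensive.
Local Open Scope ring_scope.

(* Encode an r x (n - m) matrix D with the product code C_col x C_row: the
   resulting (r + e_{m'-1}) x (n + m') array Y D has C_row-codewords as rows and
   C_col-codewords as columns.  Its entries in rows r + t, t < e_l, of column
   n + l are the "virtual" parities whose vanishing defines S, so when they
   vanish the top-left r x n block of Y D lies in S.  Conversely Y D is
   determined by its data entries and its virtual parities: sweeping the
   columns from the left and the rows from the top, every row or column met
   has at least as many known entries as the dimension of its MDS code.
   Hence the unit impulse at a data position (i, j) extends to an array Y D
   whose (i0, j0) entry is c_{i,j}, and the same sweeps show that this array
   vanishes on the rows above i, on the columns left of j, on the other
   columns of the tread of j and on the other rows of the riser of i. *)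

Section SystematicMDS.
Variables (F : fieldType) (K R : nat) (A : 'M[F]_(K, R)).
Hypothesis A_MDS : is_sys_MDS A.

Lemma sys_MDS_inj_eq0 (u : 'rV[F]_K) (f : 'I_K -> 'I_(K + R)) :
  injective f -> (forall k, sys_enc A u 0 (f k) = 0) -> u = 0.
Proof.
move=> f_inj fu0; have [//|/A_MDS] := eqVneq u 0.
rewrite ltnNge => /negP[]; rewrite /wt.
set Z := [set _ | _].
have sZ : Z \subset ~: (f @: [set: 'I_K]).
  by apply/subsetP=> q; rewrite !inE; apply: contra => /imsetP[k _ ->]; rewrite fu0.
have := subset_leq_card sZ; have := cardsC (f @: [set: 'I_K]).
by rewrite card_imset // cardsT !card_ord; lia.
Qed.

Lemma sys_MDS_shift_eq0 (u : 'rV[F]_K) (c : nat -> F) (s : nat) :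
  (s <= R)%N -> (forall q : 'I_(K + R), c q = sys_enc A u 0 q) ->
  (forall k, (k < K)%N -> c k = 0 \/ (K <= k + s)%N /\ c (k + s)%N = 0) ->
  u = 0.
Proof.
move=> sR cE c0.
have ks_lt (k : 'I_K) : (k + s < K + R)%N by rewrite -addSn leq_add.
pose f (k : 'I_K) := if c k == 0 then lshift R k else Ordinal (ks_lt k).
apply: (@sys_MDS_inj_eq0 u f) => [k1 k2|k].
  have k1K := ltn_ord k1; have k2K := ltn_ord k2.
  rewrite /f; case: (eqVneq (c k1) 0) => [_|/negbTE c1];
  case: (eqVneq (c k2) 0) => [_|/negbTE c2] /(congr1 val) /= E; apply: val_inj => //=.
  - by case: (c0 k2 k2K) => [/eqP|[]]; rewrite ?c2 //; lia.
  - by case: (c0 k1 k1K) => [/eqP|[]]; rewrite ?c1 //; lia.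
  - lia.
rewrite /f -cE; case: eqP => //= /eqP ck.
by case: (c0 k (ltn_ord k)) => [/eqP|[]//]; rewrite (negbTE ck).
Qed.

End SystematicMDS.

Lemma big_ord2_single (V : nmodType) (r n : nat) (P : nat -> nat -> bool)
    (f : nat -> nat -> V) (i : 'I_r) (j : 'I_n) :
  P i j -> (forall (p : 'I_r) (q : 'I_n), P p q -> (p != i) || (q != j) -> f p q = 0) ->
  \sum_(p < r) \sum_(q < n | P p q) f p q = f i j.
Proof.
move=> Pij f0; rewrite (bigD1 i) //= (bigD1 j) //= big1 ?addr0 => [|q /andP[Pq qj]].
  rewrite big1 ?addr0 // => p pi; apply: big1 => q Pq.
  by apply: f0; rewrite // pi.
by apply: f0; rewrite // qj orbT.
Qed.

Definition mx_nat (V : zmodType) (a b : nat) (M : 'M[V]_(a, b)) (p q : nat) : V :=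
  if insub p is Some x then if insub q is Some y then M x y else 0 else 0.

Lemma mx_natE (V : zmodType) a b (M : 'M[V]_(a, b)) (x : 'I_a) (y : 'I_b) :
  mx_nat M x y = M x y.
Proof. by rewrite /mx_nat valK valK. Qed.

Lemma mx_nat_out (V : zmodType) a b (M : 'M[V]_(a, b)) p q :
  (a <= p)%N || (b <= q)%N -> mx_nat M p q = 0.
Proof.
rewrite /mx_nat; case: insubP => [x px _|//]; case: insubP => [y qy _|//].
by rewrite leqNgt px leqNgt qy.
Qed.

Lemma mx_natB (V : zmodType) a b (M N : 'M[V]_(a, b)) p q :
  mx_nat (M - N) p q = mx_nat M p q - mx_nat N p q.
Proof.
rewrite /mx_nat; case: insub => [x|]; last by rewrite subr0.
by case: insub => [y|]; rewrite ?mxE ?subr0.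
Qed.

Section ProductCode.
Variables (F : fieldType) (K R r E : nat).
Variables (A : 'M[F]_(K, R)) (B : 'M[F]_(r, E)).

Definition prod_mx (D : 'M[F]_(r, K)) : 'M[F]_(r + E, K + R) :=
  col_mx D (B^T *m D) *m row_mx 1%:M A.

Definition prod_array D := mx_nat (prod_mx D).

Lemma prod_arrayB D1 D2 p q :
  prod_array (D1 - D2) p q = prod_array D1 p q - prod_array D2 p q.
Proof. by rewrite /prod_array /prod_mx mulmxBr -add_col_mx -opp_col_mx mulmxBl mx_natB. Qed.

Lemma prod_array_sys D (p : 'I_r) (q : 'I_K) : prod_array D p q = D p q.
Proof.
rewrite /prod_array -[p : nat]/(lshift E p : nat) -[q : nat]/(lshift R q : nat) mx_natE.
by rewrite /prod_mx mul_mx_row mulmx1 row_mxEl col_mxEu.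
Qed.

Lemma prod_array_row D (p : 'I_(r + E)) (q : 'I_(K + R)) :
  prod_array D p q = sys_enc A (row p (col_mx D (B^T *m D))) 0 q.
Proof.
rewrite /prod_array mx_natE /sys_enc -[X in row_mx X]mulmx1 -mul_mx_row.
by rewrite -row_mul [RHS]mxE.
Qed.

Lemma prod_array_col D (q : 'I_(K + R)) (p : 'I_(r + E)) :
  prod_array D p q = sys_enc B (col q (D *m row_mx 1%:M A))^T 0 p.
Proof.
rewrite /prod_array mx_natE /prod_mx mul_col_mx /sys_enc.
rewrite -(splitK p); case: (split p) => [p'|t] /=; first by rewrite col_mxEu row_mxEl !mxE.
rewrite col_mxEd row_mxEr -mulmxA !mxE; apply: eq_bigr => k _.
by rewrite !mxE mulrC.
Qed.

Hypotheses (A_MDS : is_sys_MDS A) (B_MDS : is_sys_MDS B).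

Lemma prod_array_row_eq0 D p s : (s <= R)%N ->
  (forall k, (k < K)%N ->
     prod_array D p k = 0 \/ (K <= k + s)%N /\ prod_array D p (k + s) = 0) ->
  forall q, prod_array D p q = 0.
Proof.
move=> sR D0 q; case: (ltnP p (r + E)) => [p_lt|]; last first.
  by move=> p_ge; rewrite /prod_array mx_nat_out ?p_ge.
case: (ltnP q (K + R)) => [q_lt|q_ge]; last by rewrite /prod_array mx_nat_out ?q_ge ?orbT.
have u0 := sys_MDS_shift_eq0 A_MDS sR (prod_array_row D (Ordinal p_lt)) D0.
by rewrite (prod_array_row D (Ordinal p_lt) (Ordinal q_lt)) u0 /sys_enc mul0mx row_mx0 mxE.
Qed.

Lemma prod_array_col_eq0 D q s : (s <= E)%N ->
  (forall p, (p < r - s)%N -> prod_array D p q = 0) ->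
  (forall t, (t < s)%N -> prod_array D (r + t) q = 0) ->
  forall p, prod_array D p q = 0.
Proof.
move=> sE up0 down0 p; case: (ltnP q (K + R)) => [q_lt|]; last first.
  by move=> q_ge; rewrite /prod_array mx_nat_out ?q_ge ?orbT.
case: (ltnP p (r + E)) => [p_lt|p_ge]; last by rewrite /prod_array mx_nat_out ?p_ge.
have D0 k : (k < r)%N ->
    prod_array D k q = 0 \/ (r <= k + s)%N /\ prod_array D (k + s) q = 0.
  move=> kr; case: (ltnP k (r - s)) => ks; first by left; apply: up0.
  by right; split; [lia | rewrite -(subnKC (_ : r <= k + s)%N) ?down0 //; lia].
have v0 := sys_MDS_shift_eq0 B_MDS sE (prod_array_col D (Ordinal q_lt)) D0.
by rewrite (prod_array_col D (Ordinal q_lt) (Ordinal p_lt)) v0 /sys_enc mul0mx row_mx0 mxE.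
Qed.

End ProductCode.

Lemma vcnt_eq_hgt n r m m' (e : nat -> nat) i i0 q :
  (i <= i0)%N -> vcnt n r m m' e i = vcnt n r m m' e i0 -> (q < n)%N ->
  (r - i0 <= hgt n r m m' e q)%N -> (r - i <= hgt n r m m' e q)%N.
Proof.
move=> le_ii0 eq_v q_lt; rewrite /vcnt in eq_v.
set S := [set _ | _] in eq_v; set S0 := [set _ | _] in eq_v.
have /eqP S_S0 : S == S0.
  by rewrite eqEcard eq_v leqnn andbT; apply/subsetP => x; rewrite !inE; lia.
move=> hq; have : Ordinal q_lt \in S0 by rewrite inE.
by rewrite -S_S0 inE.
Qed.

Section StairDecoding.
Variables (F : fieldType) (n r m m' : nat) (e : nat -> nat).

Local Notation h := (hgt n r m m' e).

Lemma hgt_gt0 q : (0 < h q)%N -> (n - m - m' <= q)%N.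
Proof. by rewrite /hgt; case: ifP => //; lia. Qed.

Lemma in_TE i q : (q < n - m)%N -> in_T n r m m' e i q = (r - h q <= i < r)%N.
Proof. by move=> qK; rewrite /in_T /hgt qK; case: ifP => /=; lia. Qed.

Lemma data_posE i q : data_pos n r m m' e i q = (q < n - m)%N && (i < r - h q)%N.
Proof.
rewrite /data_pos; case: (ltnP q (n - m)) => qK; last by rewrite andbF.
by rewrite in_TE //; lia.
Qed.

Lemma parity_posE i q :
  parity_pos n r m m' e i q = [&& (i < r)%N, (q < n)%N & (r - h q <= i)%N].
Proof.
rewrite /parity_pos; case: (ltnP q (n - m)) => qK; first by rewrite in_TE //; lia.
by rewrite /hgt !ifF; lia.
Qed.

Hypothesis m'_le : (m' <= n - m)%N.

Lemma hgt_stair l : (l < m')%N -> h (n - m - m' + l) = e l.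
Proof. by move=> lm; rewrite /hgt ifF ?ifT; [congr e|..]; lia. Qed.

Hypothesis e_step : forall l, (l.+1 < m')%N -> (e l <= e l.+1)%N.

Lemma e_homo l1 l2 : (l1 <= l2)%N -> (l2 < m')%N -> (e l1 <= e l2)%N.
Proof.
move=> l12 l2m; apply: (@homo_leq_in _ [pred l | l < m']%N e leq leqnn leq_trans) => //=.
- by move=> x y _ ym k /andP[_ ky]; apply: ltn_trans ym.
- by move=> k _; apply: e_step.
- exact: leq_ltn_trans l2m.
Qed.

Lemma hgt_homo q1 q2 : (q1 <= q2)%N -> (q2 < n - m)%N -> (h q1 <= h q2)%N.
Proof.
move=> q12 q2K; rewrite /hgt; case: ifP => // q1b.
have -> : (q2 < n - m - m')%N = false by lia.
by rewrite q2K (leq_ltn_trans q12 q2K); apply: e_homo; lia.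
Qed.

Lemma hgt_le q : (q < n - m)%N -> (h q <= e m'.-1)%N.
Proof.
move=> qK; rewrite /hgt qK; case: ifP => // qb.
by apply: e_homo; lia.
Qed.

Variables (Arow : 'M[F]_(n - m, m + m')) (Acol : 'M[F]_(r, e m'.-1)).
Hypotheses (Arow_MDS : is_sys_MDS Arow) (Acol_MDS : is_sys_MDS Acol).
Hypotheses (m_lt_n : (m < n)%N) (e_le_r : (e m'.-1 <= r)%N).

Local Notation Y := (prod_array Arow Acol).

(* For stair column [q = n - m - m' + l], column [q + (m + m') = n + l] of the
   product array is column [l] of the global parities [P']; [h q = 0] off the
   stair. *)
Definition virtual_zero D := forall q t, (q < n - m)%N -> (t < h q)%N ->
  Y D (r + t) (q + (m + m')) = 0.

Lemma virtual_row_eq0 D q t : virtual_zero D -> (q < n - m)%N -> (t < h q)%N ->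
  (forall q', (q' < q)%N -> forall p, Y D p q' = 0) -> forall q', Y D (r + t) q' = 0.
Proof.
move=> vz qK tq left0; apply: (prod_array_row_eq0 Arow_MDS (leqnn _)) => k kK.
case: (ltnP k q) => kq; first by left; apply: left0.
have := hgt_gt0 (leq_ltn_trans (leq0n t) tq).
right; split; first lia.
by apply: vz => //; apply: leq_trans tq (hgt_homo kq kK).
Qed.

Lemma cols_eq0 D J : virtual_zero D ->
  (forall p q, (q < J)%N -> (q < n - m)%N -> (p < r - h q)%N -> Y D p q = 0) ->
  forall q, (q < J)%N -> (q < n - m)%N -> forall p, Y D p q = 0.
Proof.
move=> vz data0; elim/ltn_ind => q IH qJ qK.
apply: (prod_array_col_eq0 Acol_MDS (hgt_le qK)) => [p|t tq]; first exact: data0.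
by apply: (virtual_row_eq0 vz qK tq) => q' q'q; apply: IH => //; lia.
Qed.

Lemma row_eq0 D p : (p < r)%N -> virtual_zero D ->
  (forall q, (q < n - m)%N -> (p < r - h q)%N -> Y D p q = 0) ->
  (forall q, (q < n - m)%N -> (r - h q <= p)%N ->
     forall p', (p' < r - h q)%N -> Y D p' (q + (m + m')) = 0) ->
  forall q, Y D p q = 0.
Proof.
move=> pr vz data0 up0; apply: (prod_array_row_eq0 Arow_MDS (leqnn _)) => k kK.
case: (ltnP p (r - h k)) => pk; first by left; apply: data0.
have := @hgt_gt0 k; right; split; first lia.
by apply: (prod_array_col_eq0 Acol_MDS (hgt_le kK)) => [p'|t]; [apply: up0 | apply: vz].
Qed.

Lemma rows_eq0 D I : virtual_zero D ->
  (forall p q, (p < I)%N -> (q < n - m)%N -> (p < r - h q)%N -> Y D p q = 0) ->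
  forall p, (p < I)%N -> (p < r)%N -> forall q, Y D p q = 0.
Proof.
move=> vz data0; elim/ltn_ind => p IH pI pr.
apply: row_eq0 => // [q|q qK qp p' p'q]; first exact: data0.
by apply: IH; lia.
Qed.

Lemma prod_array_in_S D : virtual_zero D -> in_S n r m m' e Arow Acol (Y D).
Proof.
move=> vz; exists (fun p l => Y D p (n + l)); split.
  move=> p pr; have p_lt : (p < r + e m'.-1)%N by apply: ltn_addr.
  exists (row (Ordinal p_lt) (col_mx D (Acol^T *m D))).
  apply/rowP => k; rewrite mxE -(prod_array_row Arow Acol D (Ordinal p_lt) k) /=.
  by case: ifP => // /negbT; rewrite -leqNgt => /subnKC ->.
move=> l lm t tl; have q_lt : (n + l < n - m + (m + m'))%N by lia.
set v := (col (Ordinal q_lt) (D *m row_mx 1%:M Arow))^T.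
have -> : \row_(k < r) Y D k (n + l) = v.
  apply/rowP => k; have /= := prod_array_col Arow Acol D (Ordinal q_lt) (lshift _ k).
  by rewrite /sys_enc row_mxEl mxE => ->.
have /= := prod_array_col Arow Acol D (Ordinal q_lt) (rshift r t).
rewrite /sys_enc row_mxEr => <-.
have -> : (n + l = n - m - m' + l + (m + m'))%N by lia.
by apply: vz; [lia | rewrite hgt_stair].
Qed.

(* The stair cell of column [q] in row [r - 1 - t] records the virtual parity
   symbol [Y D (r + t) (q + (m + m'))]; both are indexed by [t < h q]. *)
Definition stair_data D : 'M[F]_(r, n - m) := \matrix_(p, q)
  if (r - h q <= p)%N then Y D (r + (r.-1 - p)) (q + (m + m')) else Y D p q.

Lemma stair_data_data D (p : 'I_r) (q : 'I_(n - m)) :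
  (p < r - h q)%N -> stair_data D p q = Y D p q.
Proof. by move=> pq; rewrite mxE leqNgt pq. Qed.

Lemma stair_data_virtual_zero D :
  (forall (p : 'I_r) (q : 'I_(n - m)), (r - h q <= p)%N -> stair_data D p q = 0) ->
  virtual_zero D.
Proof.
move=> st0 q t qK tq; have hr : (h q <= r)%N by apply: leq_trans e_le_r; apply: hgt_le.
have p_lt : (r.-1 - t < r)%N by lia.
have pq : (r - h q <= r.-1 - t)%N by lia.
have := st0 (Ordinal p_lt) (Ordinal qK) pq; rewrite mxE /= pq.
by have -> : (r.-1 - (r.-1 - t) = t)%N by lia.
Qed.

Lemma stair_dataB D1 D2 : stair_data (D1 - D2) = stair_data D1 - stair_data D2.
Proof. by apply/matrixP => p q; rewrite !mxE; case: ifP => _; apply: prod_arrayB. Qed.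

Lemma stair_data_inj : injective stair_data.
Proof.
move=> D1 D2 eq12; apply/eqP; rewrite -subr_eq0; apply/eqP/matrixP => p q.
set D := D1 - D2.
have st0 p' q' : stair_data D p' q' = 0 by rewrite stair_dataB eq12 subrr mxE.
have vz : virtual_zero D by apply: stair_data_virtual_zero.
have col0 := @cols_eq0 D (n - m) vz.
rewrite [RHS]mxE -(prod_array_sys Arow Acol); apply: col0 => // p' q' _ q'K p'q.
by rewrite -(st0 (Ordinal (leq_trans p'q (leq_subr _ _))) (Ordinal q'K)) stair_data_data.
Qed.

Section Impulse.
Variables (D : 'M[F]_(r, n - m)) (i : 'I_r) (j : 'I_(n - m)).
Hypotheses (D_impulse : stair_data D = delta_mx i j) (ij_data : (i < r - h j)%N).

Lemma impulse_virtual_zero : virtual_zero D.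
Proof.
apply: stair_data_virtual_zero => p q pq; rewrite D_impulse mxE.
have : (p != i) || (q != j).
  by apply: contraLR pq => /norP[/negPn/eqP-> /negPn/eqP->]; rewrite -ltnNge.
by case/orP=> /negbTE->; rewrite ?andbF.
Qed.

Lemma impulse_off p q : (q < n - m)%N -> (p < r - h q)%N -> (p != i) || (q != j) ->
  Y D p q = 0.
Proof.
move=> qK pq off; have pr : (p < r)%N by apply: leq_trans pq (leq_subr _ _).
rewrite -[p]/(Ordinal pr : nat) -[q]/(Ordinal qK : nat) -stair_data_data //.
rewrite D_impulse mxE -!val_eqE /=.
by case/orP: off => /negbTE->; rewrite ?andbF.
Qed.

Lemma impulse_at : Y D i j = 1.
Proof. by rewrite -stair_data_data // D_impulse mxE !eqxx. Qed.

Lemma impulse_response i0 j0 : parity_pos n r m m' e i0 j0 ->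
  [/\ (i0 < i)%N || (j0 < j)%N -> Y D i0 j0 = 0,
      j != j0 :> nat -> h j = h j0 -> Y D i0 j0 = 0
    & i != i0 :> nat -> vcnt n r m m' e i = vcnt n r m m' e i0 -> Y D i0 j0 = 0].
Proof.
rewrite parity_posE => /and3P[i0r j0n i0j0].
have ir := ltn_ord i; have jK := ltn_ord j.
have vz := impulse_virtual_zero.
have above p : (p < i)%N -> forall q, Y D p q = 0.
  move=> pi; apply: (rows_eq0 vz _ pi (ltn_trans pi ir)) => p' q p'i qK p'q.
  by apply: impulse_off => //; rewrite neq_ltn p'i.
have left q : (q < j)%N -> forall p, Y D p q = 0.
  move=> qj; apply: (cols_eq0 vz _ qj (ltn_trans qj jK)) => p q' q'j q'K pq'.
  by apply: impulse_off => //; rewrite orbC neq_ltn q'j.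
split.
- by case/orP=> [/above|/left].
- rewrite neq_ltn => /orP[jj0 hjj0|j0j _]; last exact: left.
  have j0K : (j0 < n - m)%N.
    rewrite ltnNge; apply/negP => Kj0; move: ij_data.
    by rewrite hjj0 /hgt !ifF; lia.
  apply: (prod_array_col_eq0 Acol_MDS (hgt_le j0K)) => [p pj0|t tj0].
    by apply: impulse_off => //; rewrite orbC neq_ltn jj0 orbT.
  by apply: (virtual_row_eq0 vz (ltn_ord j)) => //; rewrite hjj0.
- rewrite neq_ltn => /orP[ii0 vii0|i0i _]; last exact: above.
  apply: row_eq0 => // [q qK i0q|q qK qi0 p' p'q].
    by apply: impulse_off => //; rewrite neq_ltn ii0 orbT.
  apply: above; have := vcnt_eq_hgt (ltnW ii0) vii0 (_ : q < n)%N; lia.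
Qed.

Lemma impulse_coef (c : nat -> nat -> F) i0 j0 :
  (forall X, in_S n r m m' e Arow Acol X ->
     X i0 j0 = \sum_(p < r) \sum_(q < n | data_pos n r m m' e p q) c p q * X p q) ->
  c i j = Y D i0 j0.
Proof.
move=> c_lin; rewrite (c_lin _ (prod_array_in_S impulse_virtual_zero)).
have jn : (j < n)%N by apply: leq_trans (ltn_ord j) (leq_subr _ _).
rewrite (big_ord2_single (P := data_pos n r m m' e) (f := fun p q => c p q * Y D p q)
  (i := i) (j := Ordinal jn)) /=.
- by rewrite impulse_at mulr1.
- by rewrite data_posE ltn_ord.
move=> p q; rewrite data_posE -!val_eqE /= => /andP[qK pq] off.
by rewrite impulse_off ?mulr0.
Qed.

End Impulse.

End StairDecoding.

Theorem mainTheorem4 (w : nat) (F : finFieldType) (n r m m' : nat)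
  (e : nat -> nat)
  (Arow : 'M[F]_(n - m, m + m')) (Acol : 'M[F]_(r, e m'.-1))
  (c : nat -> nat -> F) (i0 j0 : nat) :
  #|F| = (2 ^ w)%N ->
  (1 <= m)%N -> (m < n)%N -> (1 <= m')%N -> (m' <= n - m)%N ->
  (0 < e 0)%N -> (forall l, (l.+1 < m')%N -> (e l <= e l.+1)%N) ->
  (e m'.-1 <= r)%N ->
  (n + m' <= 2 ^ w)%N -> (r + e m'.-1 <= 2 ^ w)%N ->
  is_sys_MDS Arow -> is_sys_MDS Acol ->
  parity_pos n r m m' e i0 j0 ->
  (* c gives the coefficients of X_{i0,j0} as a linear function of the data *)
  (forall X, in_S n r m m' e Arow Acol X ->
     X i0 j0 = (\sum_(i < r) \sum_(j < n | data_pos n r m m' e i j)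
                  c i j * X i j)%R) ->
  forall i j, data_pos n r m m' e i j ->
    [/\ (c i j != 0)%R -> (i <= i0)%N /\ (j <= j0)%N,
        j <> j0 -> hgt n r m m' e j = hgt n r m m' e j0 -> c i j = 0%R
      & i <> i0 -> vcnt n r m m' e i = vcnt n r m m' e i0 -> c i j = 0%R].
Proof.
move=> _ _ m_lt_n _ m'_le _ e_step e_le_r _ _ Arow_MDS Acol_MDS par0 c_lin i j.
rewrite data_posE => /andP[jK ij]; have ir : (i < r)%N by apply: leq_trans ij (leq_subr _ _).
have stair_inj := stair_data_inj m'_le e_step Arow_MDS Acol_MDS m_lt_n e_le_r.
have [g _ stair_g] := injF_bij stair_inj.
have D_imp := stair_g (delta_mx (Ordinal ir) (Ordinal jK)).
have := impulse_coef m'_le e_step m_lt_n e_le_r D_imp ij c_lin.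
have [upleft tread riser] :=
  impulse_response m'_le e_step Arow_MDS Acol_MDS m_lt_n e_le_r D_imp ij par0.
move=> /= ->; split => [nz|/eqP/tread // | /eqP/riser //].
by split; rewrite leqNgt; apply: contra nz => lt; rewrite upleft ?lt ?orbT.
Qed.
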